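(* If $(\Phi,D)$ is a domain-free s-continuous information algebra, then its associated labeled information algebra $(\Psi,D)$ is a labeled s-continuous information algebra, i.e., there is a family $\{\Gamma_x\}_{x\in D}$ making $(\Psi,\{\Gamma_x\}_{x\in D},D)$ a labeled s-continuous information algebra.
   Context: A domain-free information algebra $(\Phi,D)$ consists of a set $\Phi$, a lattice $D$, a combination $\otimes$ and a focusing $(\psi,x)\mapsto\psi^{\Rightarrow x}$ ($x\in D$) such that: $\otimes$ is associative, commutative with neutral element $e$; $(\psi^{\Rightarrow y})^{\Rightarrow x}=\psi^{\Rightarrow x\wedge y}$; $(\phi^{\Rightarrow x}\otimes\psi)^{\Rightarrow x}=\phi^{\Rightarrow x}\otimes\psi^{\Rightarrow x}$; every $\psi$ has some $x$ with $\psi^{\Rightarrow x}=\psi$; $\psi\otimes\psi^{\Rightarrow x}=\psi$. In both domain-free and labeled algebras, $\psi\le\phi$ iff $\psi\otimes\phi=\phi$; suprema refer to this order. $a\ll b$ means: for every directed $X$ with $b\le\vee X$ there is $c\in X$ with $a\le c$. A domain-free $(\Phi,D)$ with $D$ having a top element is s-continuous if there exists $\Gamma\subseteq\Phi$, closed under combination and containing $e$, such that every directed subset of $\Gamma$ has a supremum in $\Phi$ and $\phi^{\Rightarrow x}=\vee\{\psi\in\Gamma:\psi=\psi^{\Rightarrow x}\ll\phi\}$ for all $\phi\in\Phi$, $x\in D$. The associated labeled information algebra is $(\Psi,D)$ with $\Psi=\{(\phi,x)\in\Phi\times D:\phi=\phi^{\Rightarrow x}\}$, labeling $d(\phi,x)=x$,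 combination $(\phi,x)\otimes(\psi,y)=(\phi\otimes\psi,x\vee y)$, marginalization $(\phi,x)^{\downarrow y}=(\phi^{\Rightarrow y},y)$ for $y\le x$; its neutral elements are $e_x=(e,x)$. For a labeled information algebra (labeling $d$, combination $\otimes$, marginalization $\downarrow$, neutral elements $e_x$ with $d(e_x)=x$), write $\Phi_x$ for the elements with label $x$ and $\ll_x$ for the way-below relation of the poset $(\Phi_x,\le)$. A labeled s-continuous information algebra is a triple $(\Phi,\{\Gamma_x\}_{x\in D},D)$ with $D$ having a top element $\top$ and, for each $x\in D$, $\Gamma_x\subseteq\Phi_x$ closed under combination, containing $e_x$, such that: (convergency) every directed $X\subseteq\Gamma_x$ has a supremum $\vee X$ and $\vee X\in\Phi_x$; (strong density) for all $\phi\in\Phi_x$, $\phi=\vee\{\psi^{\downarrow x}\in\Gamma_x:\ \psi\in\Phi,\ x\le d(\psi),\ \psi^{\downarrow x}\otimes e_\top\in\Gamma_\top,\ \psi^{\downarrow x}\ll_x\phi\}$. *)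

From mathcomp Require Import all_boot all_order.
Set Implicit Arguments.
Unset Strict Implicit.
Unset Printing Implicit Defensive.
Import Order.Theory.
Local Open Scope order_scope.

Section OrderNotions.
Variables (T : Type) (le : T -> T -> Prop).

Definition is_ub (X : T -> Prop) (s : T) : Prop := forall a, X a -> le a s.

Definition is_sup (C : T -> Prop) (X : T -> Prop) (s : T) : Prop :=
  C s /\ is_ub X s /\ (forall u, C u -> is_ub X u -> le s u).

Definition directed (X : T -> Prop) : Prop :=
  (exists a, X a) /\
  (forall a b, X a -> X b -> exists c, X c /\ le a c /\ le b c).

Definition way_below (C : T -> Prop) (a b : T) : Prop :=
  forall X : T -> Prop, (forall z, X z -> C z) -> directed X ->
  forall s, is_sup C X s -> le b s -> exists c, X c /\ le a c.
End OrderNotions.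

Definition info_le (T : Type) (comb : T -> T -> T) (a b : T) : Prop :=
  comb a b = b.

Definition allT (T : Type) : T -> Prop := fun _ => True.

Definition domain_free_IA (disp : Order.disp_t) (D : latticeType disp)
    (Phi : Type) (comb : Phi -> Phi -> Phi) (e : Phi)
    (focus : Phi -> D -> Phi) : Prop :=
  associative comb /\ commutative comb /\ left_id e comb /\
  (forall psi (x y : D), focus (focus psi y) x = focus psi (x `&` y)) /\
  (forall phi psi (x : D),
      focus (comb (focus phi x) psi) x = comb (focus phi x) (focus psi x)) /\
  (forall psi, exists x : D, focus psi x = psi) /\
  (forall psi (x : D), comb psi (focus psi x) = psi).

Definition df_s_continuous (disp : Order.disp_t) (D : tLatticeType disp)
    (Phi : Type) (comb : Phi -> Phi -> Phi) (e : Phi)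
    (focus : Phi -> D -> Phi) : Prop :=
  let le := info_le comb in
  exists Gamma : Phi -> Prop,
    [/\ (forall a b, Gamma a -> Gamma b -> Gamma (comb a b)),
        Gamma e,
        (forall X : Phi -> Prop, (forall z, X z -> Gamma z) -> directed le X ->
           exists s, is_sup le (@allT Phi) X s) &
        (forall phi (x : D),
           is_sup le (@allT Phi)
             (fun psi => [/\ Gamma psi, psi = focus psi x &
                             way_below le (@allT Phi) psi phi])
             (focus phi x))].

(* ---------- labeled s-continuous information algebras ----------
   The labeled algebra is given by a carrier type [L] with a membership
   predicate [InPsi] (the actual set of valuations), labeling [lab],
   combination [comb], marginalization [marg] (only used for y <= d(psi))
   and neutral elements [neut]. *)
Definition labeled_s_continuous (disp : Order.disp_t) (D : tLatticeType disp)
    (L : Type) (InPsi : L -> Prop) (lab : L -> D)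
    (comb : L -> L -> L) (marg : L -> D -> L) (neut : D -> L)
    (Gamma : D -> L -> Prop) : Prop :=
  let le := info_le comb in
  let Phi_ x := fun a => InPsi a /\ lab a = x in
  [/\ (forall x a, Gamma x a -> Phi_ x a),
      (forall x a b, Gamma x a -> Gamma x b -> Gamma x (comb a b)),
      (forall x, Gamma x (neut x)),
      (forall x (X : L -> Prop), (forall z, X z -> Gamma x z) -> directed le X ->
         exists s, is_sup le InPsi X s /\ Phi_ x s) &
      (forall x phi, Phi_ x phi ->
         is_sup le InPsi
           (fun a => exists psi, InPsi psi /\ x <= lab psi /\ a = marg psi x /\
                                  Gamma x (marg psi x) /\
                                  Gamma \top (comb (marg psi x) (neut \top)) /\
                                  way_below le (Phi_ x) (marg psi x) phi)
           phi)].

Section Assoc.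
Variables (disp : Order.disp_t) (D : tLatticeType disp) (Phi : Type)
  (comb : Phi -> Phi -> Phi) (e : Phi) (focus : Phi -> D -> Phi).

Definition assoc_Psi (p : Phi * D) : Prop := p.1 = focus p.1 p.2.
Definition assoc_lab (p : Phi * D) : D := p.2.
Definition assoc_comb (p q : Phi * D) : Phi * D := (comb p.1 q.1, p.2 `|` q.2).
Definition assoc_marg (p : Phi * D) (y : D) : Phi * D := (focus p.1 y, y).
Definition assoc_neut (x : D) : Phi * D := (e, x).
End Assoc.

From Pilot Require Import Defs.
From mathcomp Require Import all_boot all_order.
Set Implicit Arguments.
Unset Strict Implicit.
Unset Printing Implicit Defensive.
Import Order.Theory.
Local Open Scope order_scope.

(* Take Gamma_x := {(g, x) : g in Gamma, g = g^{=>x}}.  For a fixed label x the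
   map g |-> (g, x) is an order isomorphism from the x-focused elements of Phi
   onto Psi_x, and focusing on x is a kernel operator of Phi (monotone,
   deflationary, idempotent).  Hence suprema of sets of x-focused elements are
   the same in Phi, among the x-focused elements and (through the isomorphism)
   in Psi, and way-below in Phi implies way-below in Psi_x.  Convergency and
   strong density of the labeled algebra are then read off the corresponding
   properties of Gamma. *)

Section SupremumTheory.
Variables (T : Type) (le : T -> T -> Prop).

Lemma is_sup_sandwich (C A B : T -> Prop) s :
  is_sup le C A s -> (forall a, A a -> B a) -> is_ub le B s -> is_sup le C B s.
Proof.
move=> [Cs [_ least]] AB ubB; split=> //; split=> // u Cu ubu.
by apply: least => // a /AB; apply: ubu.
Qed.

Lemma way_below_le (C : T -> Prop) a b :
  C b -> le b b -> way_below le C a b -> le a b.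
Proof.
move=> Cb lebb wab.
have dir1 : directed le (eq^~ b).
  by split=> [|_ _ -> ->]; exists b.
have sup1 : is_sup le C (eq^~ b) b by split=> //; split=> [_ ->|u _ ub]; last exact: ub.
have sub1 : forall z, z = b -> C z by move=> z ->.
by have [c [-> leac]] := wab _ sub1 dir1 b sup1 lebb.
Qed.

Lemma way_below_sub (C C' : T -> Prop) a b :
  (forall z, C z -> C' z) ->
  (forall X s, (forall z, X z -> C z) -> is_sup le C X s -> is_sup le C' X s) ->
  way_below le C' a b -> way_below le C a b.
Proof.
move=> CC' supCC' wab X XC dirX s supX lebs.
by apply: (wab X) lebs => [z /XC /CC'||] //; apply: supCC'.
Qed.

End SupremumTheory.

Section KernelOperator.
Variables (T : Type) (le : T -> T -> Prop) (k : T -> T).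
Hypothesis le_trans : forall a b c, le a b -> le b c -> le a c.
Hypothesis le_anti : forall a b, le a b -> le b a -> a = b.
Hypothesis k_mono : forall a b, le a b -> le (k a) (k b).
Hypothesis k_le : forall a, le (k a) a.
Hypothesis k_idem : forall a, k (k a) = k a.

Let Fix a := a = k a.

Lemma is_sup_fixedE {X : T -> Prop} {s} :
  (forall z, X z -> Fix z) -> is_sup le (@Defs.allT T) X s <-> is_sup le Fix X s.
Proof.
move=> XF; split=> [[_ [ubs least]] | [Fs [ubs least]]].
  have ubks : is_ub le X (k s) by move=> z Xz; rewrite (XF z Xz); apply/k_mono/ubs.
  split; last by split=> // u _; apply: least.
  exact/le_anti/k_le/least.
split=> //; split=> // u _ ubu; apply: (le_trans _ (k_le u)).
by apply: least => [|z Xz]; [rewrite /Fix k_idem | rewrite (XF z Xz); apply/k_mono/ubu].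
Qed.

End KernelOperator.

Section DomainFreeAlgebra.
Variables (disp : Order.disp_t) (D : tLatticeType disp) (Phi : Type)
  (comb : Phi -> Phi -> Phi) (e : Phi) (focus : Phi -> D -> Phi).
Hypothesis hIA : domain_free_IA comb e focus.

Local Notation ile := (info_le comb).
Local Notation lle := (info_le (assoc_comb comb)).
Local Notation Psi := (assoc_Psi focus).
Local Notation Psi_ x := (fun p => Psi p /\ assoc_lab p = x).

Definition focused (x : D) (a : Phi) : Prop := a = focus a x.

Definition fibre (X : Phi * D -> Prop) (x : D) : Phi -> Prop := fun a => X (a, x).

Lemma combA : associative comb. Proof. by case: hIA. Qed.
Lemma combC : commutative comb. Proof. by case: hIA => _ []. Qed.
Lemma comb0 a : comb a e = a. Proof. by case: hIA => _ [cC [c1 _]]; rewrite cC c1. Qed.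
Lemma focusI a x y : focus (focus a y) x = focus a (x `&` y).
Proof. by case: hIA => _ [_ [_ []]]. Qed.
Lemma focus_comb a b x : focus (comb (focus a x) b) x = comb (focus a x) (focus b x).
Proof. by case: hIA => _ [_ [_ [_ []]]]. Qed.
Lemma comb_focus a x : comb a (focus a x) = a.
Proof. by case: hIA => _ [_ [_ [_ [_ []]]]]. Qed.
Lemma has_support a : exists x, focus a x = a.
Proof. by case: hIA => _ [_ [_ [_ [_ []]]]]. Qed.

Lemma info_le_refl a : ile a a.
Proof. by have [x ax] := has_support a; rewrite /info_le -{2}ax comb_focus. Qed.

Lemma info_le_trans a b c : ile a b -> ile b c -> ile a c.
Proof. by rewrite /info_le => ab bc; rewrite -bc combA ab. Qed.

Lemma info_le_anti a b : ile a b -> ile b a -> a = b.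
Proof. by rewrite /info_le => ab ba; rewrite -ab combC ba. Qed.

Lemma focus_le a x : ile (focus a x) a.
Proof. by rewrite /info_le combC comb_focus. Qed.

Lemma focus_mono a b x : ile a b -> ile (focus a x) (focus b x).
Proof.
move=> ab; rewrite /info_le -focus_comb.
by congr focus; apply: info_le_trans ab; apply: focus_le.
Qed.

Lemma focus_idem a x : focus (focus a x) x = focus a x.
Proof. by rewrite focusI meetxx. Qed.

Lemma focus_focused a x : focused x (focus a x).
Proof. by rewrite /focused focus_idem. Qed.

Lemma focused_neutral x : focused x e.
Proof. by have := comb_focus e x; rewrite combC comb0. Qed.

Lemma focused_comb x a b : focused x a -> focused x b -> focused x (comb a b).
Proof. by move=> fa fb; rewrite /focused {2}fa focus_comb -fa -fb. Qed.

Lemma focused_top a x : focused x a -> focused \top a.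
Proof. by move=> fa; rewrite /focused fa focusI meet1x. Qed.

Lemma way_below_neutral (C : Phi -> Prop) b : way_below ile C e b.
Proof.
move=> X _ [[a Xa] _] s _ _; exists a; split=> //.
by rewrite /info_le combC comb0.
Qed.

Lemma assoc_leE {p q : Phi * D} : lle p q <-> ile p.1 q.1 /\ p.2 <= q.2.
Proof.
case: p q => [p1 p2] [q1 q2]; rewrite /info_le /assoc_comb /= leEjoin.
by split=> [[-> ->] | [-> /eqP ->]].
Qed.

Lemma is_sup_focusedE {x X s} :
  (forall z, X z -> focused x z) -> is_sup ile (@Defs.allT Phi) X s <-> is_sup ile (focused x) X s.
Proof.
apply: is_sup_fixedE => //; [exact: info_le_trans | exact: info_le_anti |
  by move=> a b; apply: focus_mono |
  by move=> a; apply: focus_le | by move=> a; apply: focus_idem].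
Qed.

Lemma way_below_focused x a b :
  way_below ile (@Defs.allT Phi) a b -> way_below ile (focused x) a b.
Proof. by apply: way_below_sub => // X s XF /(is_sup_focusedE XF).2. Qed.

Section Fibre.
Variables (X : Phi * D -> Prop) (x : D).
Hypothesis X_sub : forall p, X p -> Psi_ x p.

Let X_lab p : X p -> p.2 = x. Proof. by case/X_sub. Qed.
Let fibre_focused a : fibre X x a -> focused x a. Proof. by case/X_sub. Qed.

Lemma fibreE p : X p -> fibre X x p.1.
Proof. by case: p => p1 p2 Xp; rewrite /fibre -(X_lab Xp). Qed.

Lemma directed_fibre : directed lle X -> directed ile (fibre X x).
Proof.
move=> [[p Xp] dirX]; split; first by exists p.1; apply: fibreE.
move=> a b Xa Xb; have [c [Xc [/assoc_leE [ac _] /assoc_leE [bc _]]]] := dirX _ _ Xa Xb.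
by exists c.1; split=> //; apply: fibreE.
Qed.

Lemma is_sup_fibre s :
  is_sup lle (Psi_ x) X (s, x) -> is_sup ile (focused x) (fibre X x) s.
Proof.
move=> [[Ps _] [ubs least]]; split=> //; split=> [a /ubs /assoc_leE [] //|u fu ubu].
have /assoc_leE [] // : lle (s, x) (u, x).
apply: least => // p Xp; apply/assoc_leE; rewrite (X_lab Xp); split=> //.
exact/ubu/fibreE.
Qed.

Lemma is_sup_pair s :
  is_sup ile (@Defs.allT Phi) (fibre X x) s -> (exists p, X p) -> is_sup lle Psi X (s, x).
Proof.
move=> supA [p0 Xp0]; have [fs _] := (is_sup_focusedE fibre_focused).1 supA.
have [_ [ubs least]] := supA.
split=> //; split=> [p Xp | u _ ubu].
  by apply/assoc_leE; rewrite (X_lab Xp); split=> //; apply/ubs/fibreE.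
have /assoc_leE [_] := ubu _ Xp0; rewrite (X_lab Xp0) => xu.
apply/assoc_leE; split=> //; apply: least => // a Xa.
by have /assoc_leE [] := ubu _ Xa.
Qed.

End Fibre.

Lemma way_below_pair x a b :
  way_below ile (focused x) a b ->
  way_below lle (Psi_ x) (a, x) (b, x).
Proof.
move=> wab X XPx dirX [s1 s2] supX /assoc_leE [bs _].
have s2x : s2 = x by case: supX => [[_]].
subst s2; have [c [Xc ac]] := wab _ (fun a Xa => proj1 (XPx (a, x) Xa))
  (directed_fibre XPx dirX) s1 (is_sup_fibre XPx supX) bs.
by exists (c, x); split=> //; apply/assoc_leE.
Qed.

Section Gamma.
Variable G : Phi -> Prop.
Hypothesis G_neutral : G e.
Hypothesis G_sup : forall X : Phi -> Prop, (forall z, X z -> G z) -> directed ile X ->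
  exists s, is_sup ile (@Defs.allT Phi) X s.
Hypothesis G_dense : forall phi x, is_sup ile (@Defs.allT Phi)
  (fun psi => [/\ G psi, psi = focus psi x & way_below ile (@Defs.allT Phi) psi phi]) (focus phi x).

Definition assoc_Gamma (x : D) (p : Phi * D) : Prop := [/\ G p.1, focused x p.1 & p.2 = x].

Lemma assoc_convergency x (X : Phi * D -> Prop) :
  (forall z, X z -> assoc_Gamma x z) -> directed lle X ->
  exists s, is_sup lle Psi X s /\ Psi s /\ assoc_lab s = x.
Proof.
move=> XG dirX.
have XPx p : X p -> Psi_ x p by case: p => a y /XG [_ fa /= ->].
have [s supA] : exists s, is_sup ile (@Defs.allT Phi) (fibre X x) s.
  by apply: G_sup (directed_fibre XPx dirX) => a /XG [].
have supS := is_sup_pair XPx supA dirX.1.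
by exists (s, x); split=> //; case: supS.
Qed.

Lemma assoc_strong_density x f : focused x f ->
  is_sup lle Psi
    (fun a => exists psi, Psi psi /\ x <= assoc_lab psi /\ a = assoc_marg focus psi x /\
       assoc_Gamma x (assoc_marg focus psi x) /\
       assoc_Gamma \top (assoc_comb comb (assoc_marg focus psi x) (assoc_neut e \top)) /\
       way_below lle (Psi_ x) (assoc_marg focus psi x) (f, x))
    (f, x).
Proof.
move=> ff; set S := fun a => _.
have S_sub p : S p -> Psi_ x p.
  by move=> [psi [_ [_ [-> _]]]]; split=> //; apply: focus_focused.
have Sg g : [/\ G g, g = focus g x & way_below ile (@Defs.allT Phi) g f] -> S (g, x).
  move=> [Gg fg wgf]; exists (g, x); rewrite /assoc_marg /= -fg.
  do 2!split=> //; split=> //; split; first by split.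
  split; last exact/way_below_pair/way_below_focused.
  by rewrite /assoc_comb /= comb0 joinx1; split=> //; apply: focused_top fg.
have S_le p : S p -> lle p (f, x).
  move=> [psi [_ [_ [-> [_ [_ wb]]]]]]; apply: way_below_le wb => //.
  by apply/assoc_leE; split; [apply: info_le_refl | apply: lexx].
have supA : is_sup ile (@Defs.allT Phi) (fibre S x) f.
  rewrite [X in is_sup _ _ _ X]ff; apply: is_sup_sandwich (G_dense f x) _ _.
    exact: Sg.
  by move=> a /S_le /assoc_leE []; rewrite -ff.
apply: (is_sup_pair S_sub supA).
exists (e, x); apply: Sg; split=> //; first exact: focused_neutral.
exact: way_below_neutral.
Qed.

End Gamma.

End DomainFreeAlgebra.

Theorem theorem4p7 (disp : Order.disp_t) (D : tLatticeType disp) (Phi : Type)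
    (comb : Phi -> Phi -> Phi) (e : Phi) (focus : Phi -> D -> Phi) :
  domain_free_IA comb e focus ->
  df_s_continuous comb e focus ->
  exists Gamma : D -> Phi * D -> Prop,
    labeled_s_continuous (assoc_Psi focus) (@assoc_lab _ D Phi)
      (assoc_comb comb) (assoc_marg focus) (assoc_neut e) Gamma.
Proof.
move=> hIA [G [G_comb G_neutral G_sup G_dense]].
exists (assoc_Gamma focus G); split.
- by move=> x [a y] [_ fa /= ->].
- move=> x [a y] [b z] [Ga fa /= ->] [Gb fb /= ->].
  by split; [exact: G_comb | exact: (focused_comb hIA) | exact: joinxx].
- by move=> x; split=> //; apply: (focused_neutral hIA).
- exact: (assoc_convergency hIA G_sup).
- by move=> x [f y] [ff /= <-]; exact: (assoc_strong_density hIA G_neutral G_dense).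
Qed.
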